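(* Let $(\alpha_1,\alpha_2)$ be a good pair with canonical representation $(x,y,z)$ and set $\alpha_3:=1-x^2$. Suppose $a_{12},a_{13},a_{23},d$ are nonnegative reals satisfying all of \begin{align*} a_{12}(a_{12}+d)&>\alpha_1+\alpha_2-1,\\ a_{13}(a_{13}+d)&>\alpha_1+\alpha_3-1,\\ a_{23}(a_{23}+d)&>\alpha_2+\alpha_3-1,\\ \textstyle\sum_{ij\in\{12,13,23\}}a_{ij}(a_{ij}+d)&>\alpha_1+\alpha_2+\alpha_3-1,\\ a_{12}^2+2a_{13}^2+2a_{23}^2+2a_{13}d+2a_{23}d&>2\alpha_1+2\alpha_2+3\alpha_3-3,\\ 2a_{12}^2+a_{13}^2+2a_{23}^2+2a_{12}d+2a_{23}d&>2\alpha_1+3\alpha_2+2\alpha_3-3,\\ 2a_{12}^2+2a_{13}^2+a_{23}^2+2a_{12}d+2a_{13}d&>3\alpha_1+2\alpha_2+2\alpha_3-3. \end{align*} Then $a_{12}+a_{13}+a_{23}+d>1$.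
   Context: $\tau=\frac{4-\sqrt7}{9}$. A pair $(\alpha_1,\alpha_2)\in[0,1]^2$ is a good pair if $\max\{\frac14,\frac{\alpha_1+\sqrt{2\alpha_1-1}}{2}\}\le\alpha_2$ and $\max\{\alpha_2,1-\alpha_2,\frac{1+\tau^2}{2}\}\le\alpha_1$, and in addition the unique $(x,y,z)\in[0,1]^3$ with $x+y+z=1$, $x\ge\frac12$, $\alpha_1=x^2+y^2$, $\alpha_2=x^2+z^2$ satisfies $2x^2+z^2\ge1$; this $(x,y,z)$ is the canonical representation. *)

From Stdlib Require Import Reals Lra.
Open Scope R_scope.

Definition tau : R := (4 - sqrt 7) / 9.

Definition is_rep (a1 a2 x y z : R) : Prop :=
  0 <= x <= 1 /\ 0 <= y <= 1 /\ 0 <= z <= 1 /\ x + y + z = 1 /\ x >= 1/2 /\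
  a1 = x^2 + y^2 /\ a2 = x^2 + z^2.

Definition canonical_rep (a1 a2 x y z : R) : Prop :=
  is_rep a1 a2 x y z /\
  (forall x' y' z', is_rep a1 a2 x' y' z' -> x' = x /\ y' = y /\ z' = z).

Definition good_pair (a1 a2 : R) : Prop :=
  0 <= a1 <= 1 /\ 0 <= a2 <= 1 /\
  Rmax (1/4) ((a1 + sqrt (2 * a1 - 1)) / 2) <= a2 /\
  Rmax (Rmax a2 (1 - a2)) ((1 + tau^2) / 2) <= a1 /\
  exists x y z, canonical_rep a1 a2 x y z /\ 2 * x^2 + z^2 >= 1.

(* Goodness gives z <= y and 2x^2 + z^2 >= 1, hence x >= 0.699, y <= 0.293
   and x - 2y >= 0.12.  In the coordinates x, y, z the hypotheses read
   a12(a12+d) > kappa := x^2 - 2x(y+z) - 2yz, a13(a13+d) > y^2,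
   a23(a23+d) > z^2, and so on.  Suppose a12 + a13 + a23 + d <= 1.  Every
   hypothesis is monotone in a12, so a12 may be raised to make the sum
   exactly 1; the theorem thus reduces to the inconsistency of the
   normalised system in A, B, C, d (theorem [no_normalised_solution]).
   The main device is the half shift: t(t+d) > q^2 gives t + d/2 - q > 0 and
   t(t+d) = (q + s)^2 - d^2/4 for the shift s := t + d/2 - q, which turns each
   hypothesis into a statement about nonnegative shifts.  The normalised
   system is then refuted by cases on the size of A, B, C: when 3A + d >= 2
   the fifth inequality fails, when 9/5 <= 3A + d <= 2 the fourth and fifth
   cannot hold together, when B >= 1/2 the sixth or the fourth fails, when
   C >= 1/2 the seventh fails, and otherwise the fourth fails.  Two general
   facts are used throughout: a convex quadratic on an interval is bounded by
   its values at the endpoints, and a square root k of kappa satisfies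
   (x + y - k)^2 + x^2 + z^2 - 1 = -2(k - y)(x - k). *)

From Stdlib Require Import Reals Lra Psatz.
Open Scope R_scope.

(* The right-hand side of the first inequality, a1 + a2 - 1 written in x, y, z. *)
Definition kappa (x y z : R) : R := x^2 - 2*x*(y+z) - 2*y*z.

(* The half shift: since t(t+s) = (t + s/2)^2 - s^2/4, t(t+s) > q^2 forces
   t + s/2 > q. *)
Lemma half_shift_pos (t s q : R) :
  0 <= t -> 0 <= s -> 0 <= q -> t * (t + s) > q^2 -> 0 < t + s/2 - q.
Proof. intros. nra. Qed.

Lemma quad_le_max (a b c lo hi t : R) : 0 <= a -> lo <= t <= hi ->
  a*t^2 + b*t + c <= Rmax (a*lo^2 + b*lo + c) (a*hi^2 + b*hi + c).
Proof.
  intros Ha [Hl Hh].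
  pose proof (Rmax_l (a*lo^2 + b*lo + c) (a*hi^2 + b*hi + c)).
  pose proof (Rmax_r (a*lo^2 + b*lo + c) (a*hi^2 + b*hi + c)).
  set (M := Rmax _ _) in *.
  destruct (Req_dec lo hi) as [Heq | Hne].
  - subst hi. replace t with lo by lra. lra.
  - assert (Hchord : (hi - lo) * (a*t^2 + b*t + c)
        = (hi - t) * (a*lo^2 + b*lo + c) + (t - lo) * (a*hi^2 + b*hi + c)
          - a * (hi - lo) * (t - lo) * (hi - t)) by ring.
    assert (0 <= a * (t - lo) * (hi - t))
      by (apply Rmult_le_pos; [apply Rmult_le_pos|]; lra).
    nra.
Qed.

(* For k^2 = kappa the square (x + y - k)^2 differs from 1 - x^2 - z^2 by a
   product; kappa is symmetric in y, z, so this also serves with y, z swapped. *)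
Lemma kappa_square_identity (x y z k : R) :
  x + y + z = 1 -> k^2 = kappa x y z ->
  (x + y - k)^2 + x^2 + z^2 - 1 = -2 * (k - y) * (x - k).
Proof.
  intros Hsum Hk. unfold kappa in Hk.
  assert (Hone : (x + y + z)^2 = 1) by (rewrite Hsum; ring).
  lra.
Qed.

Lemma pair_sum_lt (x y z A B C d : R) :
  x + y + z = 1 -> A + B + C + d = 1 ->
  A * (A + d) + B * (B + d) + C * (C + d) > x^2 + y^2 + z^2 ->
  A*B + B*C + C*A + d/2 < x*y + y*z + z*x.
Proof.
  intros Hsum Htot h4.
  assert (Hxyz : (x + y + z)^2 = 1) by (rewrite Hsum; ring).
  assert (HABC : (A + B + C)^2 = (1 - d)^2) by (f_equal; lra).
  assert (HdABC : d * (A + B + C) = d * (1 - d)) by (f_equal; lra).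
  lra.
Qed.

Lemma pair_sum_ge_balanced (A B C d : R) :
  0 <= A -> 0 <= B -> 0 <= C -> 0 <= d -> A + B + C + d = 1 ->
  3 * A + d <= 9/5 -> B <= 1/2 -> C <= 1/2 ->
  2387/10000 <= A*B + B*C + C*A + d/2.
Proof.
  intros HA HB HC Hd Htot HAd HB2 HC2.
  assert (Hsplit : A*B + B*C + C*A + d/2 = A * (1 - d - A) + B*C + d/2)
    by (replace (1 - d - A) with (B + C) by lra; ring).
  rewrite Hsplit.
  assert (HBC0 : 0 <= B*C) by (apply Rmult_le_pos; lra).
  assert (HBC : (1/2 - B) * (1/2 - C) >= 0) by (apply Rle_ge, Rmult_le_pos; lra).
  destruct (Rle_lt_dec (B + C) (1/2)).
  - assert ((A - (1/2 - d)) * (3/5 - d/3 - A) >= 0)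
      by (apply Rle_ge, Rmult_le_pos; lra).
    pose proof (pow2_ge_0 (d - 3/40)).
    nra.
  - assert (A * (1/2 - d - A) >= 0) by (apply Rle_ge, Rmult_le_pos; lra).
    lra.
Qed.

(* Endpoint values of the two convex quadratics bounding the slack in the
   zone 9/5 <= 3A + d <= 2 (see [mid_zone_slack_neg]), whose ends are
   x - 2/3 + d/3 and x - 3/5 + d/3; the first serves when d <= 2y, the
   second when d > 2y (and hence x >= 1 - d). *)
Lemma zone_end_neg_small_d (x d t : R) :
  699/1000 <= x -> x <= 1 -> 0 <= d -> d <= 293/500 ->
  t = x - 2/3 + d/3 \/ t = x - 3/5 + d/3 ->
  5*t^2 + (6 - 10*x - 4*d)*t + (d*x - 3*d^2/2) < 0.
Proof.
  intros Hx Hx1 Hd Hd2 [-> | ->];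
    pose proof (pow2_ge_0 (d - (22-27*x)/41)); nra.
Qed.

Lemma zone_end_neg_large_d (x d t : R) :
  699/1000 <= x -> x <= 1 -> 0 <= d -> 1 - d <= x ->
  t = x - 2/3 + d/3 \/ t = x - 3/5 + d/3 ->
  5*t^2 + (2 - 6*x)*t + (d*x - 3*d^2/2) < 0.
Proof.
  intros Hx Hx1 Hd Hxd [-> | ->];
    pose proof (pow2_ge_0 (d - 21/17*(x-3/5))); nra.
Qed.

(* The gap of [sigma_le_large_d] as a polynomial inequality, W = x - B: by
   cases on the position of C relative to z and y and of d relative to W. *)
Lemma gap_nonneg_large_d (x y z d W C : R) :
  0 <= z -> z <= y -> y <= 293/1000 -> 699/1000 <= x -> x + y + z = 1 ->
  1/10 <= d -> 3/50 + d/4 <= W -> W <= x - 1/2 -> 0 <= C ->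
  C <= z + W - 3/50 - 3*d/4 -> C * (C + d) >= z^2 ->
  0 <= W * (2*x - 1 - W) - d * (x - 1/2 - W) + C * (W - d) - (z - C) * (y - C).
Proof.
  intros Hz Hzy Hy3 Hx7 Hsum Hd HWlo HWhi HC HCmax h3.
  destruct (Rle_lt_dec C z) as [Hcz | Hcz].
  - assert (Hzc : (z - C) * (z + C) <= C * d) by nra.
    assert (Hyc : (z - C) * (y - C) <= y * (z - C)) by nra.
    assert (Hzd : z - C <= d/2) by nra.
    destruct (Rle_lt_dec d W).
    + assert ((W - d) * (x - 1/2 - W) >= 0) by (apply Rle_ge, Rmult_le_pos; lra).
      assert (C * (W - d) >= 0) by (apply Rle_ge, Rmult_le_pos; lra).
      assert ((d/2 - (z - C)) * y >= 0) by (apply Rle_ge, Rmult_le_pos; lra).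
      assert ((z - C) * C >= 0) by (apply Rle_ge, Rmult_le_pos; lra).
      assert ((W - d) * (x - 1/2) >= 0) by (apply Rle_ge, Rmult_le_pos; lra).
      assert (d * (x - 1/2 - y/2) >= 0) by (apply Rle_ge, Rmult_le_pos; lra).
      lra.
    + nra.
  - destruct (Rle_lt_dec C y).
    + assert ((C - z) * (y - C) >= 0) by nra.
      destruct (Rle_lt_dec d W); nra.
    + destruct (Rle_lt_dec d W); nra.
Qed.

Section Admissible.
Variables x y z : R.
Hypotheses (Hx : 0 <= x) (Hy : 0 <= y) (Hz : 0 <= z) (Hsum : x + y + z = 1)
  (Hzy : z <= y) (Hext : 2 * x^2 + z^2 >= 1).

Lemma x_ge : 699/1000 <= x.
Proof. nra. Qed.

Lemma y_le : y <= 293/1000.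
Proof. pose proof x_ge. nra. Qed.

Lemma x_sub_2y_ge : 3/25 <= x - 2 * y.
Proof. pose proof x_ge. nra. Qed.

Lemma sigma_le : x*y + y*z + z*x <= 2331/10000.
Proof. pose proof x_ge. nra. Qed.

Lemma kappa_root : exists k, 0 <= k /\ k^2 = kappa x y z /\ y <= k.
Proof.
  assert (Hyk2 : y^2 <= kappa x y z) by (unfold kappa; nra).
  exists (sqrt (kappa x y z)).
  pose proof (sqrt_pos (kappa x y z)).
  assert (Hk : (sqrt (kappa x y z))^2 = kappa x y z) by (apply pow2_sqrt; nra).
  repeat split; [assumption | assumption | nra].
Qed.

(* Case 3A + d >= 2.  With shifts u, v of B, C one has A = x - (u + v), and
   the fifth inequality becomes (u+v)(3(u+v) - 2x + 4y) > d^2, impossible. *)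
Lemma no_large_first (A B C d : R) :
  0 <= B -> 0 <= C -> 0 <= d -> A + B + C + d = 1 -> 2 <= 3 * A + d ->
  B * (B + d) > y^2 -> C * (C + d) > z^2 ->
  A^2 + 2 * B * (B + d) + 2 * C * (C + d) > x^2 + 2 * y^2 + 2 * z^2 ->
  False.
Proof.
  intros HB HC Hd Htot Hzone h2 h3 h5.
  pose proof (half_shift_pos B d y HB Hd Hy h2) as Hu.
  pose proof (half_shift_pos C d z HC Hd Hz h3) as Hv.
  set (u := B + d/2 - y) in *; set (v := C + d/2 - z) in *.
  assert (HA : A = x - (u + v)) by (unfold u, v; lra).
  assert (HBu : B = y + u - d/2) by (unfold u; lra).
  assert (HCv : C = z + v - d/2) by (unfold v; lra).
  assert (Hkey : (u + v) * (3 * (u + v) - 2 * x + 4 * y) > d^2).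
  { rewrite HA, HBu, HCv in h5. nra. }
  pose proof x_ge.
  assert (Hfac : 3 * (u + v) - 2 * x + 4 * y < d) by lra.
  destruct (Rle_lt_dec (u + v) d); nra.
Qed.

(* In the zone 9/5 <= 3(x - (u+v)) + d <= 2 the sum of the slacks of the
   fourth and fifth inequalities (in the shifts u, v) is negative: it is
   bounded by a convex quadratic in u + v that is negative at both ends. *)
Lemma mid_zone_slack_neg (u v d : R) :
  0 <= u -> 0 <= v -> 0 <= d -> d/2 <= y + u -> d/2 <= z + v ->
  9/5 <= 3 * (x - (u + v)) + d -> 3 * (x - (u + v)) + d <= 2 ->
  -4*x*(u+v) + 2*(u+v)^2 + d*x - d*(u+v) + 6*y*u + 6*z*v + 3*u^2 + 3*v^2
    - 3*d^2/2 < 0.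
Proof.
  intros Hu Hv Hd Hdu Hdv Hzlo Hzhi.
  pose proof x_ge as Hx7; pose proof y_le as Hy3.
  assert (Hz1 : z = 1 - x - y) by lra.
  set (w := u + v) in *.
  assert (Hw : x - 2/3 + d/3 <= w <= x - 3/5 + d/3) by lra.
  replace (-4*x*w + 2*w^2 + d*x - d*w + 6*y*u + 6*z*v + 3*u^2 + 3*v^2 - 3*d^2/2)
    with (w*(2 - 6*x + 4*z - 2*y) + 5*w^2 + 6*u*(y-z-v) + d*(x-w) - 3*d^2/2)
    by (unfold w; rewrite Hz1; ring).
  assert (Hcross : 6*u*(y-z-v) <= 6*u*(y-d/2)) by nra.
  destruct (Rle_lt_dec (d/2) y) as [Hdy | Hdy].
  - (* the slack is at most 5w^2 + (6 - 10x - 4d)w + dx - 3d^2/2 *)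
    assert (6*u*(y-d/2) <= 6*w*(y-d/2)) by (unfold w; nra).
    pose proof (quad_le_max 5 (6 - 10*x - 4*d) (d*x - 3*d^2/2) _ _ w
                  ltac:(lra) Hw).
    pose proof (Rmax_lub_lt _ _ _
      (zone_end_neg_small_d x d _ Hx7 ltac:(lra) Hd ltac:(lra) (or_introl eq_refl))
      (zone_end_neg_small_d x d _ Hx7 ltac:(lra) Hd ltac:(lra) (or_intror eq_refl))).
    rewrite Hz1 in *. lra.
  - (* the slack is at most 5w^2 + (2 - 6x)w + dx - 3d^2/2 *)
    assert (6*u*(y-d/2) <= 0) by nra.
    assert (w*(2 - 6*x + 4*z - 2*y) <= w*(2 - 6*x + d))
      by (apply Rmult_le_compat_l; unfold w; lra).
    pose proof (quad_le_max 5 (2 - 6*x) (d*x - 3*d^2/2) _ _ w ltac:(lra) Hw).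
    pose proof (Rmax_lub_lt _ _ _
      (zone_end_neg_large_d x d _ Hx7 ltac:(lra) Hd ltac:(lra) (or_introl eq_refl))
      (zone_end_neg_large_d x d _ Hx7 ltac:(lra) Hd ltac:(lra) (or_intror eq_refl))).
    lra.
Qed.

Lemma no_mid_first (A B C d : R) :
  0 <= B -> 0 <= C -> 0 <= d -> A + B + C + d = 1 ->
  9/5 <= 3 * A + d -> 3 * A + d <= 2 ->
  B * (B + d) > y^2 -> C * (C + d) > z^2 ->
  A * (A + d) + B * (B + d) + C * (C + d) > x^2 + y^2 + z^2 ->
  A^2 + 2 * B * (B + d) + 2 * C * (C + d) > x^2 + 2 * y^2 + 2 * z^2 ->
  False.
Proof.
  intros HB HC Hd Htot Hzlo Hzhi h2 h3 h4 h5.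
  pose proof (half_shift_pos B d y HB Hd Hy h2) as Hu.
  pose proof (half_shift_pos C d z HC Hd Hz h3) as Hv.
  set (u := B + d/2 - y) in *; set (v := C + d/2 - z) in *.
  assert (HA : A = x - (u + v)) by (unfold u, v; lra).
  assert (HBu : B = y + u - d/2) by (unfold u; lra).
  assert (HCv : C = z + v - d/2) by (unfold v; lra).
  rewrite HA in Hzlo, Hzhi.
  pose proof (mid_zone_slack_neg u v d ltac:(lra) ltac:(lra) Hd
                ltac:(lra) ltac:(lra) Hzlo Hzhi).
  rewrite HA, HBu, HCv in h4, h5.
  lra.
Qed.

(* B >= 1/2 with a large shift of A, small d: writing W = x - B, the gap
   AB+BC+CA+d/2 - (xy+yz+zx) equals W(2x-1-W) - d(x-1/2-W) + AC - yz, which is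
   increasing in W and bounded below at W = 3/50 + d/4. *)
Lemma sigma_le_small_d (A B C d : R) :
  0 <= C -> 0 <= d -> d <= 1/10 -> A + B + C + d = 1 -> 1/2 <= B ->
  y + 3/50 - d/4 <= A -> 3/50 + d/4 <= x - B -> C * (C + d) >= z^2 ->
  x*y + y*z + z*x <= A*B + B*C + C*A + d/2.
Proof.
  intros HC Hd Hd1 Htot HB HA HW h3.
  pose proof x_ge as Hx7; pose proof y_le as Hy3.
  assert (Hsigma : A*B + B*C + C*A + d/2 - (x*y + y*z + z*x)
     = (x - B) * (2*x - 1 - (x - B)) - d * (x - 1/2 - (x - B)) + A*C - y*z).
  { replace A with (1 - B - C - d) by lra. replace z with (1 - x - y) by lra. field. }
  enough (0 <= A*B + B*C + C*A + d/2 - (x*y + y*z + z*x)) by lra.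
  rewrite Hsigma.
  set (W := x - B) in *.
  assert (Hzd : z <= C + d/2) by nra.
  assert (Hzc : y * (C + d/2 - z) >= 0) by (apply Rle_ge, Rmult_le_pos; lra).
  assert (HAC : (A - y - (3/50 - d/4)) * C >= 0) by (apply Rle_ge, Rmult_le_pos; lra).
  assert (Hmono : (W - (3/50 + d/4)) * (2*x - 1 + d - W - (3/50 + d/4)) >= 0)
    by (apply Rle_ge, Rmult_le_pos; unfold W; lra).
  assert ((3/25 - d/2) * (x - 699/1000) >= 0) by (apply Rle_ge, Rmult_le_pos; lra).
  assert ((293/1000 - y) * d >= 0) by (apply Rle_ge, Rmult_le_pos; lra).
  assert ((3/50 - d/4) * C >= 0) by (apply Rle_ge, Rmult_le_pos; lra).
  pose proof (pow2_ge_0 (d - 1/10)).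
  lra.
Qed.

Lemma sigma_le_large_d (A B C d : R) :
  0 <= C -> 1/10 <= d -> A + B + C + d = 1 -> 1/2 <= B ->
  y + 3/50 - d/4 <= A -> 3/50 + d/4 <= x - B -> C * (C + d) >= z^2 ->
  x*y + y*z + z*x <= A*B + B*C + C*A + d/2.
Proof.
  intros HC Hd Htot HB HA HW h3.
  assert (Hsigma : A*B + B*C + C*A + d/2 - (x*y + y*z + z*x)
     = (x - B) * (2*x - 1 - (x - B)) - d * (x - 1/2 - (x - B)) + C * (x - B - d)
       - (z - C) * (y - C)).
  { replace A with (1 - B - C - d) by lra. replace z with (1 - x - y) by lra. field. }
  pose proof (gap_nonneg_large_d x y z d (x - B) C Hz Hzy y_le x_ge Hsum Hd HW
                ltac:(lra) HC ltac:(lra) h3).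
  lra.
Qed.

(* The part of the sixth inequality carried by a small shift p of A. *)
Lemma shift_excess_le (k p d : R) :
  y <= k -> 0 <= p -> 0 <= d -> p <= 3/50 + d/4 -> k - y <= x - 1/2 - p ->
  (k - y) * (6*p - 2*(x - k)) + p * (3*p - 2*(x - 2*y)) <= d^2.
Proof.
  intros Hyk Hp Hd Hpd Hkp.
  pose proof y_le as Hy3; pose proof x_sub_2y_ge as Hx2y.
  assert (Hsecond : p * (3*p - 2*(x - 2*y)) <= p * (3*p - 6/25))
    by (apply Rmult_le_compat_l; lra).
  assert (Hfirst : 6*p - 2*(x - k) <= 4*p - 207/500) by lra.
  pose proof (pow2_ge_0 d).
  destruct (Rle_lt_dec p (3/50)).
  - assert (0 <= (k - y) * (2*(x - k) - 6*p)) by (apply Rmult_le_pos; lra).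
    assert (0 <= p * (6/25 - 3*p)) by (apply Rmult_le_pos; lra).
    lra.
  - assert (Hd2 : (4*(p - 3/50))^2 <= d^2) by (apply pow_incr; lra).
    destruct (Rle_lt_dec (4*p) (207/500)).
    + assert (0 <= (k - y) * (2*(x - k) - 6*p)) by (apply Rmult_le_pos; lra).
      pose proof (pow2_ge_0 (p - 3/50 - 3/650)).
      lra.
    + assert ((k - y) * (6*p - 2*(x - k))
              <= (11/25 - (p - 3/50)) * (4*p - 207/500)).
      { apply Rle_trans with ((k - y) * (4*p - 207/500)).
        - apply Rmult_le_compat_l; lra.
        - apply Rmult_le_compat_r; lra. }
      pose proof (pow2_ge_0 (p - 3/50 - 1027/17000)).
      lra.
Qed.

Lemma no_large_second_small_shift (k p v B d : R) :
  0 <= k -> k^2 = kappa x y z -> y <= k -> 0 <= p -> 0 <= v -> 0 <= d ->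
  p <= 3/50 + d/4 -> 1/2 <= B -> B <= x + y - k - (p + v) ->
  B^2 + 2 * (2*k*p + p^2 - d^2/4) + 2 * (2*z*v + v^2 - d^2/4) > 1 - x^2 - z^2 ->
  False.
Proof.
  intros Hk0 Hk Hyk Hp Hv Hd Hpd HB HBle h6.
  pose proof (kappa_square_identity x y z k Hsum Hk) as Hid.
  assert (HB2 : B^2 <= (x + y - k - (p + v))^2) by (apply pow_incr; lra).
  assert (Hvfac : -2*(x + y - k) + 4*z + 3*v + 2*p <= 0) by lra.
  assert (Hvpart : v * (-2*(x + y - k) + 4*z + 3*v + 2*p) <= 0) by nra.
  pose proof (shift_excess_le k p d Hyk Hp Hd Hpd ltac:(lra)).
  lra.
Qed.

(* Case B >= 1/2: with shifts p, v of A, C, either p is small and the sixth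
   inequality fails, or it is large and the fourth one fails. *)
Lemma no_large_second (A B C d : R) :
  0 <= A -> 0 <= C -> 0 <= d -> A + B + C + d = 1 -> 1/2 <= B ->
  A * (A + d) > kappa x y z -> C * (C + d) > z^2 ->
  A * (A + d) + B * (B + d) + C * (C + d) > x^2 + y^2 + z^2 ->
  2 * A * (A + d) + B^2 + 2 * C * (C + d) > 3 * x^2 + 2 * y^2 + 3 * z^2 - 1 ->
  False.
Proof.
  intros HA HC Hd Htot HB h1 h3 h4 h6.
  destruct kappa_root as [k [Hk0 [Hk Hyk]]].
  pose proof (half_shift_pos A d k HA Hd Hk0 ltac:(lra)) as Hp.
  pose proof (half_shift_pos C d z HC Hd Hz h3) as Hv.
  set (p := A + d/2 - k) in *; set (v := C + d/2 - z) in *.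
  assert (HAp : A = k + p - d/2) by (unfold p; lra).
  assert (HCv : C = z + v - d/2) by (unfold v; lra).
  clearbody p v.
  destruct (Rle_lt_dec p (3/50 + d/4)) as [Hpd | Hpd].
  - apply (no_large_second_small_shift k p v B d); try lra.
    rewrite HAp, HCv in h6.
    unfold kappa in Hk.
    assert (Hxyz : (x + y + z)^2 = 1) by (rewrite Hsum; ring).
    lra.
  - pose proof (pair_sum_lt x y z A B C d Hsum Htot h4).
    assert (HAy : y + 3/50 - d/4 <= A) by lra.
    assert (HBx : 3/50 + d/4 <= x - B) by lra.
    destruct (Rle_lt_dec d (1/10)).
    + pose proof (sigma_le_small_d A B C d HC Hd ltac:(lra) Htot HB HAy HBx
                    ltac:(lra)).
      lra.
    + pose proof (sigma_le_large_d A B C d HC ltac:(lra) Htot HB HAy HBx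
                    ltac:(lra)).
      lra.
Qed.

(* The value of the convex bound of [no_large_third] at its far endpoint. *)
Lemma third_corner_bound (k : R) :
  0 <= k -> k^2 = kappa x y z -> y <= k -> 1/2 <= x + z - k ->
  1/4 + 2 * (x + z - k - 1/2)^2 + 4 * k * (x + z - k - 1/2) <= 1 - x^2 - y^2.
Proof.
  intros Hk0 Hk Hyk Hhalf. unfold kappa in Hk.
  pose proof x_ge. nra.
Qed.

(* Case C >= 1/2: with shifts p, v of A, B one has C = X - (p + v) for
   X = x + z - k, and the seventh inequality is bounded by a convex quadratic
   in p + v on [0, X - 1/2] whose endpoint values are at most 1 - x^2 - y^2. *)
Lemma no_large_third (A B C d : R) :
  0 <= A -> 0 <= B -> 0 <= d -> A + B + C + d = 1 -> 1/2 <= C ->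
  A * (A + d) > kappa x y z -> B * (B + d) > y^2 ->
  2 * A * (A + d) + 2 * B * (B + d) + C^2 > 3 * x^2 + 3 * y^2 + 2 * z^2 - 1 ->
  False.
Proof.
  intros HA HB Hd Htot HC h1 h2 h7.
  destruct kappa_root as [k [Hk0 [Hk Hyk]]].
  pose proof (half_shift_pos A d k HA Hd Hk0 ltac:(lra)) as Hp.
  pose proof (half_shift_pos B d y HB Hd Hy h2) as Hv.
  set (p := A + d/2 - k) in *; set (v := B + d/2 - y) in *.
  assert (HAp : A = k + p - d/2) by (unfold p; lra).
  assert (HBv : B = y + v - d/2) by (unfold v; lra).
  clearbody p v.
  set (X := x + z - k).
  assert (HCX : C = X - (p + v)) by (unfold X; lra).
  assert (Hid : X^2 + x^2 + y^2 - 1 = -2 * (k - z) * (x - k)).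
  { apply (kappa_square_identity x z y k); [lra | rewrite Hk; unfold kappa; ring]. }
  assert (Hcorner : 3*(X - 1/2)^2 + (4*k - 2*X)*(X - 1/2) + X^2 <= 1 - x^2 - y^2).
  { pose proof (third_corner_bound k Hk0 Hk Hyk ltac:(unfold X in *; lra)).
    unfold X in *; lra. }
  assert (Horigin : 3*0^2 + (4*k - 2*X)*0 + X^2 <= 1 - x^2 - y^2).
  { assert ((k - z) * (x - k) >= 0)
      by (apply Rle_ge, Rmult_le_pos; unfold X in *; lra).
    lra. }
  pose proof (quad_le_max 3 (4*k - 2*X) (X^2) 0 (X - 1/2) (p + v)
                ltac:(lra) ltac:(lra)).
  pose proof (Rmax_lub _ _ _ Horigin Hcorner).
  rewrite HAp, HBv, HCX in h7.
  assert (p * v >= 0) by (apply Rle_ge, Rmult_le_pos; lra).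
  assert (v * (k - y) >= 0) by (apply Rle_ge, Rmult_le_pos; lra).
  unfold kappa in Hk.
  assert (Hxyz : (x + y + z)^2 = 1) by (rewrite Hsum; ring).
  pose proof (pow2_ge_0 d).
  lra.
Qed.

Theorem no_normalised_solution (A B C d : R) :
  0 <= A -> 0 <= B -> 0 <= C -> 0 <= d -> A + B + C + d = 1 ->
  A * (A + d) > kappa x y z ->
  B * (B + d) > y^2 ->
  C * (C + d) > z^2 ->
  A * (A + d) + B * (B + d) + C * (C + d) > x^2 + y^2 + z^2 ->
  A^2 + 2 * B * (B + d) + 2 * C * (C + d) > x^2 + 2 * y^2 + 2 * z^2 ->
  2 * A * (A + d) + B^2 + 2 * C * (C + d) > 3 * x^2 + 2 * y^2 + 3 * z^2 - 1 ->
  2 * A * (A + d) + 2 * B * (B + d) + C^2 > 3 * x^2 + 3 * y^2 + 2 * z^2 - 1 ->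
  False.
Proof.
  intros HA HB HC Hd Htot h1 h2 h3 h4 h5 h6 h7.
  destruct (Rle_lt_dec 2 (3 * A + d)).
  { exact (no_large_first A B C d HB HC Hd Htot ltac:(lra) h2 h3 h5). }
  destruct (Rle_lt_dec (9/5) (3 * A + d)).
  { exact (no_mid_first A B C d HB HC Hd Htot ltac:(lra) ltac:(lra) h2 h3 h4 h5). }
  destruct (Rle_lt_dec (1/2) B).
  { exact (no_large_second A B C d HA HC Hd Htot ltac:(lra) h1 h3 h4 h6). }
  destruct (Rle_lt_dec (1/2) C).
  { exact (no_large_third A B C d HA HB Hd Htot ltac:(lra) h1 h2 h7). }
  pose proof (pair_sum_lt x y z A B C d Hsum Htot h4).
  pose proof (pair_sum_ge_balanced A B C d HA HB HC Hd Htot ltac:(lra)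
                ltac:(lra) ltac:(lra)).
  pose proof sigma_le.
  lra.
Qed.
End Admissible.

Lemma good_pair_canonical (a1 a2 x y z : R) :
  good_pair a1 a2 -> canonical_rep a1 a2 x y z ->
  is_rep a1 a2 x y z /\ z <= y /\ 2 * x^2 + z^2 >= 1.
Proof.
  intros [_ [_ [_ [Hmax [x' [y' [z' [[Hrep' _] Hext]]]]]]]] [Hrep Huniq].
  destruct (Huniq x' y' z' Hrep') as [-> [-> ->]].
  split; [exact Hrep | split; [| exact Hext]].
  assert (Ha21 : a2 <= a1).
  { eapply Rle_trans; [| exact Hmax].
    eapply Rle_trans; [apply Rmax_l | apply Rmax_l]. }
  destruct Hrep as [[Hx0 _] [[Hy0 _] [[Hz0 _] [_ [_ [Ha1 Ha2]]]]]].
  subst a1 a2. nra.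
Qed.

Theorem mainTheorem7 (a1 a2 x y z a12 a13 a23 d : R) :
  good_pair a1 a2 ->
  canonical_rep a1 a2 x y z ->
  let a3 := 1 - x^2 in
  0 <= a12 -> 0 <= a13 -> 0 <= a23 -> 0 <= d ->
  a12 * (a12 + d) > a1 + a2 - 1 ->
  a13 * (a13 + d) > a1 + a3 - 1 ->
  a23 * (a23 + d) > a2 + a3 - 1 ->
  a12 * (a12 + d) + a13 * (a13 + d) + a23 * (a23 + d) > a1 + a2 + a3 - 1 ->
  a12^2 + 2 * a13^2 + 2 * a23^2 + 2 * a13 * d + 2 * a23 * d
    > 2 * a1 + 2 * a2 + 3 * a3 - 3 ->
  2 * a12^2 + a13^2 + 2 * a23^2 + 2 * a12 * d + 2 * a23 * d
    > 2 * a1 + 3 * a2 + 2 * a3 - 3 ->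
  2 * a12^2 + 2 * a13^2 + a23^2 + 2 * a12 * d + 2 * a13 * d
    > 3 * a1 + 2 * a2 + 2 * a3 - 3 ->
  a12 + a13 + a23 + d > 1.
Proof.
  intros Hgood Hcan a3 H12 H13 H23 Hd g1 g2 g3 g4 g5 g6 g7.
  destruct (good_pair_canonical a1 a2 x y z Hgood Hcan) as [Hrep [Hzy Hext]].
  destruct Hrep as [[Hx0 _] [[Hy0 _] [[Hz0 _] [Hs [_ [Ha1 Ha2]]]]]].
  unfold a3 in *; subst a1 a2.
  apply Rnot_le_gt; intro Hle.
  (* Raise a12 to A so that the four variables sum to 1. *)
  set (A := 1 - a13 - a23 - d).
  assert (HA : a12 <= A) by (unfold A; lra).
  assert (HAA : a12 * (a12 + d) <= A * (A + d)) by (apply Rmult_le_compat; lra).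
  assert (HA2 : a12^2 <= A^2) by (apply pow_incr; lra).
  assert (Hxyz : (x + y + z)^2 = 1) by (rewrite Hs; ring).
  apply (no_normalised_solution x y z Hx0 Hy0 Hz0 Hs Hzy Hext A a13 a23 d);
    unfold kappa, A in *; lra.
Qed.
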